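(* Let $P=(|P|,\preccurlyeq)$ be a finite poset, $S\subseteq|P|$ a chain, and $x,y$ two $\preccurlyeq$-incomparable elements of $|P|\setminus S$. Define $\preccurlyeq_{x,y}$ on $|P|$ by: $w\preccurlyeq_{x,y}z$ iff either $w\preccurlyeq z$, or ($w\preccurlyeq x$ and $y\preccurlyeq z$). Then the following are equivalent: (a) some $u\in|P|$ is $\preccurlyeq$-incomparable with at least one element of $S$ but $\preccurlyeq_{x,y}$-comparable with every element of $S$; (b) $x$ or $y$ is $\preccurlyeq$-incomparable with at least one element of $S$ but $\preccurlyeq_{x,y}$-comparable with every element of $S$; (c) $({\downarrow}x\cap S)\cup({\uparrow}y\cap S)=S$ but $({\downarrow}y\cap S)\cup({\uparrow}x\cap S)\ne S$.
   Context: For $z\in|P|$, ${\downarrow}z=\{w\in|P|: w\preccurlyeq z\}$ and ${\uparrow}z=\{w\in|P|: z\preccurlyeq w\}$. The relation $\preccurlyeq_{x,y}$ is the smallest partial ordering extending $\preccurlyeq$ in which $x\preccurlyeq_{x,y} y$. *)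

From HB Require Import structures.
From mathcomp Require Import all_boot all_order.
Set Implicit Arguments. Unset Strict Implicit. Unset Printing Implicit Defensive.
Import Order.TTheory.
Local Open Scope order_scope.

(* A finite poset P = (|P|, <=) is a finPOrderType; |P| is its finite carrier. *)

Definition lexy {d} {T : finPOrderType d} (x y : T) (w z : T) : bool :=
  (w <= z) || ((w <= x) && (y <= z)).

Definition cmpxy {d} {T : finPOrderType d} (x y : T) (w z : T) : bool :=
  lexy x y w z || lexy x y z w.

Definition is_chain {d} {T : finPOrderType d} (S : {set T}) : Prop :=
  {in S &, forall a b : T, a >=< b}.

Definition downset {d} {T : finPOrderType d} (z : T) : {set T} := [set w | w <= z].
Definition upset {d} {T : finPOrderType d} (z : T) : {set T} := [set w | z <= w].

Definition newly_comparable {d} {T : finPOrderType d} (x y : T) (S : {set T}) (u : T) : Prop :=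
  (exists2 s, s \in S & u >< s) /\ (forall s, s \in S -> cmpxy x y u s).

(** If [u] is incomparable with [s0 ∈ S] but becomes comparable with it in
    the new order, then [u <= x] and [y <= s0] (or dually [s0 <= x] and
    [y <= u]).  Comparing every other [s ∈ S] with [s0] along the chain then
    shows that each element of [S] lies below [x] or above [y], while [s0]
    itself is neither below [y] nor above [x]; this is (c).  Conversely, a
    witness [s] of the second half of (c) lies above [y] or below [x] by the
    first half, and then [x] (resp. [y]) is the required element of (b). *)

From HB Require Import structures.
From mathcomp Require Import all_boot all_order.
Import Order.TTheory.
Set Implicit Arguments. Unset Strict Implicit. Unset Printing Implicit Defensive.
Local Open Scope order_scope.

Definition splits {d} {T : finPOrderType d} (x y : T) (S : {set T}) : bool :=
  [forall s in S, (s <= x) || (y <= s)].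

Section OneSided.
Context {d : Order.disp_t} {T : finPOrderType d}.
Implicit Types (x y u s : T) (S : {set T}).

Lemma cmpxy_dual x y u s : @cmpxy _ T^d y x u s = cmpxy x y u s.
Proof. by rewrite /cmpxy /lexy !leEdual orbC; congr (_ || _); rewrite andbC. Qed.

Lemma splits_dual x y S : @splits _ T^d y x S = splits x y S.
Proof. by apply: eq_forallb => s; rewrite !leEdual orbC. Qed.

Lemma is_chain_dual S : is_chain S -> @is_chain _ T^d S.
Proof. by move=> chS a b aS bS; rewrite comparable_sym; apply: chS. Qed.

Lemma newly_comparable_dual x y S u :
  @newly_comparable _ T^d y x S u <-> newly_comparable x y S u.
Proof.
have cmpE s : ((u : T^d) >=< (s : T^d)) = (u >=< s).
  by rewrite /Order.comparable !leEdual orbC.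
rewrite /newly_comparable; split=> -[[s sS us] cmpu].
- by split=> [|t tS]; [exists s; rewrite -?cmpE | rewrite -cmpxy_dual; apply: cmpu].
- by split=> [|t tS]; [exists s; rewrite ?cmpE | rewrite cmpxy_dual; apply: cmpu].
Qed.

Lemma newly_comparable_splits_below S x y u s0 :
  is_chain S -> y \notin S -> s0 \in S -> ~~ (u <= s0) ->
  u <= x -> y <= s0 -> {in S, forall s, cmpxy x y u s} ->
  splits x y S && ~~ splits y x S.
Proof.
move=> chS yS s0S us0 ux ys0 cmpu; apply/andP; split.
  apply/forall_inP => s sS.
  case/orP: (chS s s0 sS s0S) => [ss0 | s0s]; last by rewrite (le_trans ys0 s0s) orbT.
  case/orP: (cmpu s sS) => [/orP[us | /andP[_ ->]] | /orP[su | /andP[-> _]]]; rewrite ?orbT //.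
  - by rewrite (le_trans us ss0) in us0.
  - by rewrite (le_trans su ux).
apply/forall_inPn; exists s0 => //; rewrite negb_or; apply/andP; split.
  apply: contraNN yS => s0y.
  by have <- : s0 = y by apply/le_anti; rewrite s0y ys0.
by apply: contraNN us0 => xs0; rewrite (le_trans ux xs0).
Qed.

Lemma splits_newly_comparable_above S x y s :
  ~~ (y <= x) -> splits x y S -> s \in S -> y <= s -> ~~ (x <= s) ->
  newly_comparable x y S x.
Proof.
move=> yx spl sS ys xs; split.
  exists s => //; rewrite /Order.comparable negb_or xs /=.
  by apply: contraNN yx => sx; rewrite (le_trans ys sx).
move=> t tS; rewrite /cmpxy /lexy lexx.
by case/orP: (forall_inP spl t tS) => ->; rewrite ?orbT.
Qed.

End OneSided.

Section Corollary.
Context {d : Order.disp_t} {T : finPOrderType d}.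
Implicit Types (x y u s : T) (S : {set T}).

Lemma down_up_coverE x y S :
  ((downset x :&: S) :|: (upset y :&: S) == S) = splits x y S.
Proof.
apply/eqP/forall_inP => [<- s | cover].
  by rewrite !inE => /orP[] /andP[-> _]; rewrite ?orbT.
apply/setP=> s; rewrite !inE.
by case sS: (s \in S); rewrite ?andbF // !andbT cover.
Qed.

Lemma newly_comparable_splits S x y u :
  is_chain S -> x \notin S -> y \notin S -> newly_comparable x y S u ->
  splits x y S && ~~ splits y x S.
Proof.
move=> chS xS yS [[s0 s0S]]; rewrite /Order.comparable negb_or.
move=> /andP[us0 s0u] cmpu; move: (cmpu s0 s0S).
rewrite /cmpxy /lexy (negbTE us0) (negbTE s0u) /=.
case/orP=> /andP[h1 h2]; first exact: (newly_comparable_splits_below chS yS s0S us0 h1 h2).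
(* The case [s0 <= x], [y <= u] is the first one in [T^d] with [x], [y] exchanged. *)
rewrite -splits_dual -(splits_dual y x).
apply: (newly_comparable_splits_below (u := u : T^d) (is_chain_dual chS) xS s0S);
  rewrite ?leEdual // => s sS.
by rewrite cmpxy_dual; apply: cmpu.
Qed.

Lemma splits_newly_comparable S x y :
  ~~ (y <= x) -> splits x y S -> ~~ splits y x S ->
  newly_comparable x y S x \/ newly_comparable x y S y.
Proof.
move=> yx spl /forall_inPn[s sS]; rewrite negb_or => /andP[sy xs].
case/orP: (forall_inP spl s sS) => [sx | ys].
  right; apply/newly_comparable_dual.
  apply: (splits_newly_comparable_above (s := s : T^d)); rewrite ?leEdual ?splits_dual //.
left; exact: (splits_newly_comparable_above yx spl sS).
Qed.

End Corollary.

Theorem corollary7p1 (d : Order.disp_t) (T : finPOrderType d) (S : {set T}) (x y : T) :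
  is_chain S -> x \notin S -> y \notin S -> x >< y ->
  [/\ ((exists u : T, newly_comparable x y S u) <->
        (newly_comparable x y S x \/ newly_comparable x y S y)),
      ((newly_comparable x y S x \/ newly_comparable x y S y) <->
        (((downset x :&: S) :|: (upset y :&: S) = S) /\
         ((downset y :&: S) :|: (upset x :&: S) != S)))
    & ((exists u : T, newly_comparable x y S u) <->
        (((downset x :&: S) :|: (upset y :&: S) = S) /\
         ((downset y :&: S) :|: (upset x :&: S) != S)))].
Proof.
move=> chS xS yS; rewrite /Order.comparable negb_or => /andP[_ yx].
have [c_splits splits_c] : ((downset x :&: S) :|: (upset y :&: S) = S) /\
    ((downset y :&: S) :|: (upset x :&: S) != S) <->
    splits x y S && ~~ splits y x S.
  by rewrite -!down_up_coverE; split=> [[/eqP -> ->] | /andP[/eqP -> ->]].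
have a_c (ex : exists u, newly_comparable x y S u) : splits x y S && ~~ splits y x S.
  by case: ex => u; apply: newly_comparable_splits.
have c_b (c : splits x y S && ~~ splits y x S) :
    newly_comparable x y S x \/ newly_comparable x y S y.
  by case/andP: c; apply: splits_newly_comparable.
have b_a (b : newly_comparable x y S x \/ newly_comparable x y S y) :
    exists u, newly_comparable x y S u.
  by case: b => nc; [exists x | exists y].
by split; split; auto.
Qed.
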